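(* Let $\mathcal{A}$ and $\mathcal{P}$ be cartesian categories (categories with finite limits) and let $\mathcal{D}\dashv\mathcal{C}:\mathcal{A}\rightleftarrows\mathcal{P}$ be an adjunction with left adjoint $\mathcal{D}:\mathcal{A}\to\mathcal{P}$. Let $S$ be an object of $\mathcal{A}$ such that the unique morphism $!:S\to 1$ is an effective descent morphism and the sliced functor $\mathcal{D}_S:\mathcal{A}/S\to\mathcal{P}/\mathcal{D}S$ is an equivalence of categories. Then there exists a groupoid $\mathbb{G}$ internal to $\mathcal{P}$ such that $\mathcal{A}$ is equivalent to the category $[\mathbb{G},\mathcal{P}]$ of $\mathbb{G}$-objects in $\mathcal{P}$.
   Context: For a category with pullbacks and a morphism $f:X\to Y$, $f^*:\mathcal{A}/Y\to\mathcal{A}/X$ denotes pullback along $f$, which has left adjoint $\Sigma_f$ (postcomposition with $f$). A morphism $f$ is an effective descent morphism if $f^*$ is monadic; for $!:S\to 1$ this means the pullback functor $S^*:\mathcal{A}\to\mathcal{A}/S$, $A\mapsto (\pi_1:S\times A\to S)$, is monadic. The sliced functor $\mathcal{D}_S:\mathcal{A}/S\to\mathcal{P}/\mathcal{D}S$ sends an object $g:V\to S$ to $\mathcal{D}g:\mathcal{D}V\to\mathcal{D}S$ (it is left adjoint to the functor sending $h:Z\to\mathcal{D}S$ to the pullback of $\mathcal{C}h:\mathcal{C}Z\to\mathcal{C}\mathcal{D}S$ along the unit $\eta_S:S\to\mathcal{C}\mathcal{D}S$). For an internal groupoid $\mathbb{G}$ in $\mathcal{P}$, $[\mathbb{G},\mathcal{P}]$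 denotes the category of objects of $\mathcal{P}$ equipped with an (internal) action of $\mathbb{G}$, with equivariant morphisms. *)

From Stdlib Require Import ProofIrrelevance.
Set Implicit Arguments.
Unset Strict Implicit.

Record Category : Type := {
  ob :> Type;
  hom : ob -> ob -> Type;
  idm : forall a, hom a a;
  comp : forall a b c, hom b c -> hom a b -> hom a c;
  comp_id_l : forall a b (f : hom a b), comp (idm b) f = f;
  comp_id_r : forall a b (f : hom a b), comp f (idm a) = f;
  comp_assoc : forall a b c d (h : hom c d) (g : hom b c) (f : hom a b),
      comp h (comp g f) = comp (comp h g) f }.
Arguments hom {_} _ _.
Arguments idm {_} _.
Arguments comp {_ _ _ _} _ _.
Arguments comp_id_l {_ _ _} _.
Arguments comp_id_r {_ _ _} _.
Arguments comp_assoc {_ _ _ _ _} _ _ _.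

Notation "g ∘ f" := (comp g f) (at level 40, left associativity).

Record Functor (C D : Category) : Type := {
  fobj :> C -> D;
  fmap : forall a b, hom a b -> hom (fobj a) (fobj b);
  fmap_id : forall a, fmap (idm a) = idm (fobj a);
  fmap_comp : forall a b c (g : hom b c) (f : hom a b),
      fmap (g ∘ f) = fmap g ∘ fmap f }.
Arguments fmap {_ _} _ {_ _} _.
Arguments fmap_id {_ _} _ _.
Arguments fmap_comp {_ _} _ {_ _ _} _ _.

Definition is_iso (C : Category) (a b : C) (f : hom a b) : Prop :=
  exists g : hom b a, g ∘ f = idm a /\ f ∘ g = idm b.

Definition IsEquivalence (C D : Category) (F : Functor C D) : Prop :=
  exists (G : Functor D C) (eta : forall a : C, hom a (G (F a)))
         (eps : forall b : D, hom (F (G b)) b),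
    (forall a, is_iso (eta a)) /\
    (forall a a' (f : hom a a'), fmap G (fmap F f) ∘ eta a = eta a' ∘ f) /\
    (forall b, is_iso (eps b)) /\
    (forall b b' (g : hom b b'), g ∘ eps b = eps b' ∘ fmap F (fmap G g)).

Definition Equivalent (C D : Category) : Prop :=
  exists F : Functor C D, IsEquivalence F.

Record Adjunction (C D : Category) (F : Functor C D) (U : Functor D C) : Type := {
  adj_unit : forall a : C, hom a (U (F a));
  adj_counit : forall b : D, hom (F (U b)) b;
  adj_unit_nat : forall a a' (f : hom a a'),
      fmap U (fmap F f) ∘ adj_unit a = adj_unit a' ∘ f;
  adj_counit_nat : forall b b' (g : hom b b'),
      g ∘ adj_counit b = adj_counit b' ∘ fmap F (fmap U g);
  adj_triangle_F : forall a, adj_counit (F a) ∘ fmap F (adj_unit a) = idm (F a);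
  adj_triangle_U : forall b, fmap U (adj_counit b) ∘ adj_unit (U b) = idm (U b) }.
Arguments adj_unit {_ _ _ _} _ _.
Arguments adj_counit {_ _ _ _} _ _.
Arguments adj_unit_nat {_ _ _ _} _ {_ _} _.
Arguments adj_counit_nat {_ _ _ _} _ {_ _} _.
Arguments adj_triangle_F {_ _ _ _} _ _.
Arguments adj_triangle_U {_ _ _ _} _ _.

Record Pullback (C : Category) (x y z : C) (f : hom x z) (g : hom y z) : Type := {
  pb_ob : C;
  pb_p1 : hom pb_ob x;
  pb_p2 : hom pb_ob y;
  pb_comm : f ∘ pb_p1 = g ∘ pb_p2;
  pb_pair : forall w (a : hom w x) (b : hom w y), f ∘ a = g ∘ b -> hom w pb_ob;
  pb_pair_p1 : forall w (a : hom w x) (b : hom w y) (H : f ∘ a = g ∘ b),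
      pb_p1 ∘ pb_pair H = a;
  pb_pair_p2 : forall w (a : hom w x) (b : hom w y) (H : f ∘ a = g ∘ b),
      pb_p2 ∘ pb_pair H = b;
  pb_uniq : forall w (u v : hom w pb_ob),
      pb_p1 ∘ u = pb_p1 ∘ v -> pb_p2 ∘ u = pb_p2 ∘ v -> u = v }.
Arguments pb_ob {_ _ _ _ _ _} _.
Arguments pb_p1 {_ _ _ _ _ _} _.
Arguments pb_p2 {_ _ _ _ _ _} _.
Arguments pb_comm {_ _ _ _ _ _} _.
Arguments pb_pair {_ _ _ _ _ _} _ {_} _ _ _.
Arguments pb_pair_p1 {_ _ _ _ _ _} _ {_} _ _ _.
Arguments pb_pair_p2 {_ _ _ _ _ _} _ {_} _ _ _.
Arguments pb_uniq {_ _ _ _ _ _} _ {_} _ _ _ _.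

Lemma pb_pair_ext (C : Category) (x y z : C) (f : hom x z) (g : hom y z)
  (P : Pullback f g) w (a a' : hom w x) (b b' : hom w y)
  (H : f ∘ a = g ∘ b) (H' : f ∘ a' = g ∘ b') :
  a = a' -> b = b' -> pb_pair P a b H = pb_pair P a' b' H'.
Proof. intros -> ->. f_equal. apply proof_irrelevance. Qed.

(** A cartesian category (category with finite limits), presented with a
    chosen terminal object and chosen pullbacks. *)
Record FinLimCat : Type := {
  flc_cat :> Category;
  term : flc_cat;
  term_hom : forall a : flc_cat, hom a term;
  term_uniq : forall (a : flc_cat) (f g : hom a term), f = g;
  pullback : forall (x y z : flc_cat) (f : hom x z) (g : hom y z), Pullback f g }.
Arguments term {_}.
Arguments term_hom {_} _.
Arguments pullback {_ _ _ _} _ _.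

Section Slice.
Variables (C : Category) (s : C).

Definition sl_ob := { v : C & hom v s }.
Definition sl_hom (a b : sl_ob) :=
  { h : hom (projT1 a) (projT1 b) | projT2 b ∘ h = projT2 a }.

Lemma sl_hom_eq a b (u v : sl_hom a b) : proj1_sig u = proj1_sig v -> u = v.
Proof. destruct u, v; simpl; intros ->; f_equal; apply proof_irrelevance. Qed.

Definition sl_id (a : sl_ob) : sl_hom a a := exist _ (idm _) (comp_id_r _).

Lemma sl_comp_proof a b c (h : sl_hom b c) (g : sl_hom a b) :
  projT2 c ∘ (proj1_sig h ∘ proj1_sig g) = projT2 a.
Proof.
  rewrite comp_assoc, (proj2_sig h). exact (proj2_sig g).
Qed.

Definition sl_comp a b c (h : sl_hom b c) (g : sl_hom a b) : sl_hom a c :=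
  exist _ (proj1_sig h ∘ proj1_sig g) (sl_comp_proof h g).

Lemma sl_id_l a b (f : sl_hom a b) : sl_comp (sl_id b) f = f.
Proof. apply sl_hom_eq; simpl; apply comp_id_l. Qed.
Lemma sl_id_r a b (f : sl_hom a b) : sl_comp f (sl_id a) = f.
Proof. apply sl_hom_eq; simpl; apply comp_id_r. Qed.
Lemma sl_assoc a b c d (h : sl_hom c d) (g : sl_hom b c) (f : sl_hom a b) :
  sl_comp h (sl_comp g f) = sl_comp (sl_comp h g) f.
Proof. apply sl_hom_eq; simpl; apply comp_assoc. Qed.

Definition Slice : Category :=
  {| ob := sl_ob; hom := sl_hom; idm := sl_id; comp := sl_comp;
     comp_id_l := sl_id_l; comp_id_r := sl_id_r; comp_assoc := sl_assoc |}.
End Slice.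

Section Sliced.
Variables (C D : Category) (F : Functor C D) (S : C).

Definition sliced_obj (a : Slice S) : Slice (F S) :=
  existT _ (F (projT1 a)) (fmap F (projT2 a)).

Lemma sliced_map_proof (a b : Slice S) (h : hom a b) :
  projT2 (sliced_obj b) ∘ fmap F (proj1_sig h) = projT2 (sliced_obj a).
Proof. simpl. rewrite <- fmap_comp. f_equal. exact (proj2_sig h). Qed.

Definition sliced_map (a b : Slice S) (h : hom a b) :
  hom (sliced_obj a) (sliced_obj b) :=
  exist _ (fmap F (proj1_sig h)) (sliced_map_proof h).

Definition sliced_functor : Functor (Slice S) (Slice (F S)).
Proof.
  refine {| fobj := sliced_obj; fmap := sliced_map |}.
  - intros a; apply sl_hom_eq; simpl; apply fmap_id.
  - intros a b c g f; apply sl_hom_eq; simpl; apply fmap_comp.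
Defined.
End Sliced.

Section PullbackFunctor.
Variables (L : FinLimCat) (x y : L) (f : hom x y).

Definition pbf_obj (a : Slice y) : Slice x :=
  existT _ (pb_ob (pullback f (projT2 a))) (pb_p1 (pullback f (projT2 a))).

Lemma pbf_map_comm (a b : Slice y) (h : hom a b) :
  f ∘ pb_p1 (pullback f (projT2 a)) =
  projT2 b ∘ (proj1_sig h ∘ pb_p2 (pullback f (projT2 a))).
Proof. rewrite comp_assoc, (proj2_sig h). apply pb_comm. Qed.

Definition pbf_map (a b : Slice y) (h : hom a b) : hom (pbf_obj a) (pbf_obj b) :=
  exist _ (pb_pair (pullback f (projT2 b)) _ _ (pbf_map_comm h))
          (pb_pair_p1 _ _ _ _).

Definition pullback_functor : Functor (Slice y) (Slice x).
Proof.
  refine {| fobj := pbf_obj; fmap := pbf_map |}.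
  - intros a; apply sl_hom_eq; simpl.
    apply pb_uniq.
    + rewrite pb_pair_p1, comp_id_r. reflexivity.
    + rewrite pb_pair_p2, comp_id_r. simpl. apply comp_id_l.
  - intros a b c g h; apply sl_hom_eq; simpl.
    apply pb_uniq.
    + rewrite pb_pair_p1, comp_assoc, pb_pair_p1, pb_pair_p1. reflexivity.
    + etransitivity; [apply pb_pair_p2|].
      rewrite (comp_assoc (pb_p2 _)).
      etransitivity; [|apply f_equal2; [apply eq_sym, pb_pair_p2|reflexivity]].
      etransitivity; [apply eq_sym, comp_assoc|].
      etransitivity; [|apply comp_assoc].
      apply f_equal. apply eq_sym, pb_pair_p2.
Defined.
End PullbackFunctor.

(** * Monadic functors and effective descent morphisms *)

Section EilenbergMoore.
Variables (C B : Category) (F : Functor C B) (U : Functor B C)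
  (adj : Adjunction F U).

(** Algebras for the monad [T = U F] with multiplication [U ε F]. *)
Record em_ob : Type := {
  alg_ob : C;
  alg_str : hom (U (F alg_ob)) alg_ob;
  alg_unit : alg_str ∘ adj_unit adj alg_ob = idm alg_ob;
  alg_mult : alg_str ∘ fmap U (fmap F alg_str) =
             alg_str ∘ fmap U (adj_counit adj (F alg_ob)) }.

Definition em_hom (a b : em_ob) :=
  { h : hom (alg_ob a) (alg_ob b) |
    h ∘ alg_str a = alg_str b ∘ fmap U (fmap F h) }.

Lemma em_hom_eq a b (u v : em_hom a b) : proj1_sig u = proj1_sig v -> u = v.
Proof. destruct u, v; simpl; intros ->; f_equal; apply proof_irrelevance. Qed.

Lemma em_id_proof (a : em_ob) :
  idm (alg_ob a) ∘ alg_str a = alg_str a ∘ fmap U (fmap F (idm (alg_ob a))).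
Proof. rewrite !fmap_id, comp_id_l, comp_id_r. reflexivity. Qed.

Definition em_id (a : em_ob) : em_hom a a := exist _ (idm _) (em_id_proof a).

Lemma em_comp_proof a b c (h : em_hom b c) (g : em_hom a b) :
  (proj1_sig h ∘ proj1_sig g) ∘ alg_str a =
  alg_str c ∘ fmap U (fmap F (proj1_sig h ∘ proj1_sig g)).
Proof.
  rewrite <- comp_assoc, (proj2_sig g), comp_assoc, (proj2_sig h).
  rewrite !fmap_comp. apply eq_sym, comp_assoc.
Qed.

Definition em_comp a b c (h : em_hom b c) (g : em_hom a b) : em_hom a c :=
  exist _ (proj1_sig h ∘ proj1_sig g) (em_comp_proof h g).

Definition EM : Category.
Proof.
  refine {| ob := em_ob; hom := em_hom; idm := em_id; comp := em_comp |}.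
  - intros; apply em_hom_eq; simpl; apply comp_id_l.
  - intros; apply em_hom_eq; simpl; apply comp_id_r.
  - intros; apply em_hom_eq; simpl; apply comp_assoc.
Defined.

Lemma cmp_mult (b : B) :
  fmap U (adj_counit adj b) ∘ fmap U (fmap F (fmap U (adj_counit adj b))) =
  fmap U (adj_counit adj b) ∘ fmap U (adj_counit adj (F (U b))).
Proof.
  rewrite <- !fmap_comp. f_equal. apply eq_sym, adj_counit_nat.
Qed.

Definition cmp_obj (b : B) : EM :=
  {| alg_ob := U b; alg_str := fmap U (adj_counit adj b);
     alg_unit := adj_triangle_U adj b; alg_mult := cmp_mult b |}.

Lemma cmp_map_proof (b b' : B) (g : hom b b') :
  fmap U g ∘ alg_str (cmp_obj b) = alg_str (cmp_obj b') ∘ fmap U (fmap F (fmap U g)).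
Proof. simpl. rewrite <- !fmap_comp. f_equal. apply adj_counit_nat. Qed.

Definition cmp_map (b b' : B) (g : hom b b') : hom (cmp_obj b) (cmp_obj b') :=
  exist _ (fmap U g) (cmp_map_proof g).

Definition comparison : Functor B EM.
Proof.
  refine {| fobj := cmp_obj; fmap := cmp_map |}.
  - intros; apply em_hom_eq; simpl; apply fmap_id.
  - intros; apply em_hom_eq; simpl; apply fmap_comp.
Defined.
End EilenbergMoore.

Definition monadic (B C : Category) (U : Functor B C) : Prop :=
  exists (F : Functor C B) (adj : Adjunction F U), IsEquivalence (comparison adj).

Definition effective_descent (L : FinLimCat) (x y : L) (f : hom x y) : Prop :=
  monadic (pullback_functor f).

(** * Internal groupoids and their categories of actions *)

(** An internal groupoid in [P].  [gcomp] is defined on the object of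
    composable pairs [(g, f)] with [s g = t f] (the pullback of [s] along [t]),
    and sends it to [g ∘ f].  The axioms involving iterated pullbacks are
    stated on generalized elements (equivalent by the universal property). *)
Record InternalGroupoid (P : FinLimCat) : Type := {
  g0 : P;
  g1 : P;
  gsrc : hom g1 g0;
  gtgt : hom g1 g0;
  gid : hom g0 g1;
  gcomp : hom (pb_ob (pullback gsrc gtgt)) g1;
  ginv : hom g1 g1;
  gsrc_id : gsrc ∘ gid = idm g0;
  gtgt_id : gtgt ∘ gid = idm g0;
  gsrc_comp : gsrc ∘ gcomp = gsrc ∘ pb_p2 (pullback gsrc gtgt);
  gtgt_comp : gtgt ∘ gcomp = gtgt ∘ pb_p1 (pullback gsrc gtgt);
  gcomp_id_l : forall w (f : hom w g1) (H : gsrc ∘ (gid ∘ (gtgt ∘ f)) = gtgt ∘ f),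
      gcomp ∘ pb_pair (pullback gsrc gtgt) (gid ∘ (gtgt ∘ f)) f H = f;
  gcomp_id_r : forall w (g : hom w g1) (H : gsrc ∘ g = gtgt ∘ (gid ∘ (gsrc ∘ g))),
      gcomp ∘ pb_pair (pullback gsrc gtgt) g (gid ∘ (gsrc ∘ g)) H = g;
  gcomp_assoc : forall w (h g f : hom w g1)
      (H1 : gsrc ∘ h = gtgt ∘ g) (H2 : gsrc ∘ g = gtgt ∘ f)
      (H3 : gsrc ∘ (gcomp ∘ pb_pair (pullback gsrc gtgt) h g H1) = gtgt ∘ f)
      (H4 : gsrc ∘ h = gtgt ∘ (gcomp ∘ pb_pair (pullback gsrc gtgt) g f H2)),
      gcomp ∘ pb_pair (pullback gsrc gtgt)
                (gcomp ∘ pb_pair (pullback gsrc gtgt) h g H1) f H3 =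
      gcomp ∘ pb_pair (pullback gsrc gtgt)
                h (gcomp ∘ pb_pair (pullback gsrc gtgt) g f H2) H4;
  gsrc_inv : gsrc ∘ ginv = gtgt;
  gtgt_inv : gtgt ∘ ginv = gsrc;
  ginv_l : forall w (g : hom w g1) (H : gsrc ∘ (ginv ∘ g) = gtgt ∘ g),
      gcomp ∘ pb_pair (pullback gsrc gtgt) (ginv ∘ g) g H = gid ∘ (gsrc ∘ g);
  ginv_r : forall w (g : hom w g1) (H : gsrc ∘ g = gtgt ∘ (ginv ∘ g)),
      gcomp ∘ pb_pair (pullback gsrc gtgt) g (ginv ∘ g) H = gid ∘ (gtgt ∘ g) }.
Arguments g0 {_} _.
Arguments g1 {_} _.
Arguments gsrc {_} _.
Arguments gtgt {_} _.
Arguments gid {_} _.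
Arguments gcomp {_} _.
Arguments ginv {_} _.

Section GObjects.
Variables (P : FinLimCat) (G : InternalGroupoid P).

Notation C2 := (pullback (gsrc G) (gtgt G)).

Record gobj : Type := {
  go_ob : P;
  go_anchor : hom go_ob (g0 G);
  go_act : hom (pb_ob (pullback (gsrc G) go_anchor)) go_ob;
  go_anchor_act : go_anchor ∘ go_act = gtgt G ∘ pb_p1 (pullback (gsrc G) go_anchor);
  go_unit : forall w (x : hom w go_ob)
      (H : gsrc G ∘ (gid G ∘ (go_anchor ∘ x)) = go_anchor ∘ x),
      go_act ∘ pb_pair (pullback (gsrc G) go_anchor) (gid G ∘ (go_anchor ∘ x)) x H = x;
  go_assoc : forall w (g f : hom w (g1 G)) (x : hom w go_ob)
      (H1 : gsrc G ∘ g = gtgt G ∘ f) (H2 : gsrc G ∘ f = go_anchor ∘ x)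
      (H3 : gsrc G ∘ (gcomp G ∘ pb_pair C2 g f H1) = go_anchor ∘ x)
      (H4 : gsrc G ∘ g =
            go_anchor ∘ (go_act ∘ pb_pair (pullback (gsrc G) go_anchor) f x H2)),
      go_act ∘ pb_pair (pullback (gsrc G) go_anchor) (gcomp G ∘ pb_pair C2 g f H1) x H3 =
      go_act ∘ pb_pair (pullback (gsrc G) go_anchor)
                 g (go_act ∘ pb_pair (pullback (gsrc G) go_anchor) f x H2) H4 }.

Definition is_equivariant (a b : gobj) (h : hom (go_ob a) (go_ob b)) : Prop :=
  go_anchor b ∘ h = go_anchor a /\
  forall w (g : hom w (g1 G)) (x : hom w (go_ob a))
    (H : gsrc G ∘ g = go_anchor a ∘ x) (H' : gsrc G ∘ g = go_anchor b ∘ (h ∘ x)),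
    h ∘ (go_act a ∘ pb_pair (pullback (gsrc G) (go_anchor a)) g x H) =
    go_act b ∘ pb_pair (pullback (gsrc G) (go_anchor b)) g (h ∘ x) H'.

Definition gobj_hom (a b : gobj) := { h : hom (go_ob a) (go_ob b) | is_equivariant h }.

Lemma gobj_hom_eq a b (u v : gobj_hom a b) : proj1_sig u = proj1_sig v -> u = v.
Proof. destruct u, v; simpl; intros ->; f_equal; apply proof_irrelevance. Qed.

Lemma gobj_id_proof (a : gobj) : is_equivariant (idm (go_ob a)).
Proof.
  split; [apply comp_id_r|].
  intros w g x H H'. rewrite comp_id_l. apply f_equal.
  apply pb_pair_ext; [reflexivity|]. apply eq_sym, comp_id_l.
Qed.

Definition gobj_id (a : gobj) : gobj_hom a a := exist _ (idm _) (gobj_id_proof a).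

Lemma gobj_comp_proof a b c (k : gobj_hom b c) (h : gobj_hom a b) :
  is_equivariant (proj1_sig k ∘ proj1_sig h).
Proof.
  destruct k as [k [Ek Ak]], h as [h [Eh Ah]]; simpl.
  split.
  - rewrite comp_assoc, Ek. exact Eh.
  - intros w g x H H'.
    assert (H'' : gsrc G ∘ g = go_anchor b ∘ (h ∘ x)).
    { rewrite comp_assoc, Eh. exact H. }
    assert (H3 : gsrc G ∘ g = go_anchor c ∘ (k ∘ (h ∘ x))).
    { rewrite comp_assoc, Ek. exact H''. }
    rewrite <- comp_assoc, (Ah w g x H H''), (Ak w g (h ∘ x) H'' H3).
    apply f_equal, pb_pair_ext; [reflexivity|]. apply comp_assoc.
Qed.

Definition gobj_comp a b c (k : gobj_hom b c) (h : gobj_hom a b) : gobj_hom a c :=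
  exist _ (proj1_sig k ∘ proj1_sig h) (gobj_comp_proof k h).

Definition GObjCat : Category.
Proof.
  refine {| ob := gobj; hom := gobj_hom; idm := gobj_id; comp := gobj_comp |}.
  - intros; apply gobj_hom_eq; simpl; apply comp_id_l.
  - intros; apply gobj_hom_eq; simpl; apply comp_id_r.
  - intros; apply gobj_hom_eq; simpl; apply comp_assoc.
Defined.
End GObjects.

(* The Galois groupoid [G] is the image under [D] of the pair groupoid [S × S ⇉ S]:
   [G1 = D (S × S)] with source [D pr2] and target [D pr1], composed by
   [((t, s), (s, u)) |-> (t, u)].  It is an internal groupoid because [D_S] being an
   equivalence makes [D] preserve pullbacks over [S].  Each [a] gives the [G]-object
   [D (S × a)] over [D S], and this functor [A -> [G, P]] is an equivalence: through
   [D_S], a [G]-object is an object [V -> S] with a descent datum [S × V -> V], i.e. an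
   algebra for the monad of [S^*] (every left adjoint of [S^*] is isomorphic to
   [Σ_S]), and effective descent says these algebras are exactly the [S × a].
   Equations between maps out of an arbitrary object [W] of [P] are checked after
   precomposing with an isomorphism [D V ≅ W] over [D S], which reduces them to
   equations in [A]. *)

From Stdlib Require Import ClassicalEpsilon.
Set Implicit Arguments.
Unset Strict Implicit.

Lemma iso_epi (C : Category) (a b c : C) (j : hom a b) (f g : hom b c) :
  is_iso j -> f ∘ j = g ∘ j -> f = g.
Proof.
  intros [k [_ Hk]] E.
  rewrite <- (comp_id_r f), <- (comp_id_r g), <- Hk, !comp_assoc, E. reflexivity.
Qed.

Lemma iso_mono (C : Category) (a b c : C) (j : hom b c) (f g : hom a b) :
  is_iso j -> j ∘ f = j ∘ g -> f = g.
Proof.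
  intros [k [Hk _]] E.
  rewrite <- (comp_id_l f), <- (comp_id_l g), <- Hk, <- !comp_assoc, E. reflexivity.
Qed.

Lemma iso_comp (C : Category) (a b c : C) (f : hom a b) (g : hom b c) :
  is_iso f -> is_iso g -> is_iso (g ∘ f).
Proof.
  intros [f' [F1 F2]] [g' [G1 G2]]. exists (f' ∘ g'). split.
  - rewrite <- comp_assoc, (comp_assoc g' g f), G1, comp_id_l. exact F1.
  - rewrite <- comp_assoc, (comp_assoc f f' g'), F2, comp_id_l. exact G2.
Qed.

Lemma fmap_iso (C D : Category) (F : Functor C D) a b (f : hom a b) :
  is_iso f -> is_iso (fmap F f).
Proof.
  intros [g [E1 E2]]. exists (fmap F g). rewrite <- !fmap_comp, E1, E2, !fmap_id. auto.
Qed.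

Lemma cancel_r (C : Category) (a b c : C) (g : hom b a) (f : hom a b) (h : hom a c) :
  g ∘ f = idm a -> h ∘ g ∘ f = h.
Proof. intros E. rewrite <- comp_assoc, E, comp_id_r. reflexivity. Qed.

Lemma cancel_l (C : Category) (a b c : C) (g : hom a b) (f : hom b a) (h : hom c b) :
  g ∘ f = idm b -> g ∘ (f ∘ h) = h.
Proof. intros E. rewrite comp_assoc, E, comp_id_l. reflexivity. Qed.

Lemma fmap_comp_eq (C D : Category) (F : Functor C D) a b c
  (g : hom b c) (f : hom a b) (h : hom a c) :
  g ∘ f = h -> fmap F g ∘ fmap F f = fmap F h.
Proof. intros <-. symmetry. apply fmap_comp. Qed.

Lemma pb_pair_comp (C : Category) (x y z : C) (f : hom x z) (g : hom y z)
  (Pb : Pullback f g) w w' (a : hom w x) (b : hom w y) (H : f ∘ a = g ∘ b)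
  (u : hom w' w) (a' : hom w' x) (b' : hom w' y) (H' : f ∘ a' = g ∘ b') :
  a ∘ u = a' -> b ∘ u = b' -> pb_pair Pb a b H ∘ u = pb_pair Pb a' b' H'.
Proof.
  intros Ea Eb. apply pb_uniq.
  - rewrite comp_assoc, !pb_pair_p1. exact Ea.
  - rewrite comp_assoc, !pb_pair_p2. exact Eb.
Qed.

Section EquivalenceFacts.
Variables (C D : Category) (F : Functor C D) (F_equiv : IsEquivalence F).

Lemma equiv_faithful a b (f g : hom a b) : fmap F f = fmap F g -> f = g.
Proof.
  destruct F_equiv as (G & eta & eps & eta_iso & eta_nat & _).
  intros E. apply (iso_mono (eta_iso b)).
  rewrite <- !eta_nat, E. reflexivity.
Qed.

Lemma equiv_full a b (k : hom (F a) (F b)) : exists f, fmap F f = k.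
Proof.
  destruct F_equiv as (G & eta & eps & eta_iso & eta_nat & eps_iso & eps_nat).
  assert (G_faithful : forall x y (g1 g2 : hom x y), fmap G g1 = fmap G g2 -> g1 = g2).
  { intros x y g1 g2 E. apply (iso_epi (eps_iso x)). rewrite !eps_nat, E. reflexivity. }
  destruct (eta_iso b) as [ib [_ Hib]].
  exists (ib ∘ (fmap G k ∘ eta a)).
  apply G_faithful, (iso_epi (eta_iso a)).
  rewrite eta_nat, !comp_assoc, Hib, comp_id_l. reflexivity.
Qed.

Lemma equiv_ess_surj b : exists a (j : hom (F a) b), is_iso j.
Proof.
  destruct F_equiv as (G & eta & eps & _ & _ & eps_iso & _).
  exists (G b), (eps b). apply eps_iso.
Qed.
End EquivalenceFacts.

Section FullyFaithfulEssSurj.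
Variables (C D : Category) (F : Functor C D).
Hypothesis F_faithful : forall a b (f g : hom a b), fmap F f = fmap F g -> f = g.
Hypothesis F_full : forall a b (k : hom (F a) (F b)), exists f, fmap F f = k.
Hypothesis F_ess_surj : forall b, exists a (j : hom (F a) b), is_iso j.

Definition ess_preimage (b : D) : C :=
  proj1_sig (constructive_indefinite_description _ (F_ess_surj b)).

Lemma ess_preimage_iso_ex b : exists j : hom (F (ess_preimage b)) b, is_iso j.
Proof. exact (proj2_sig (constructive_indefinite_description _ (F_ess_surj b))). Qed.

Definition ess_iso b : hom (F (ess_preimage b)) b :=
  proj1_sig (constructive_indefinite_description _ (ess_preimage_iso_ex b)).

Lemma ess_iso_is_iso b : is_iso (ess_iso b).
Proof. exact (proj2_sig (constructive_indefinite_description _ (ess_preimage_iso_ex b))). Qed.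

Definition ess_iso_inv b : hom b (F (ess_preimage b)) :=
  proj1_sig (constructive_indefinite_description _ (ess_iso_is_iso b)).

Lemma ess_iso_invK b : ess_iso_inv b ∘ ess_iso b = idm _ /\ ess_iso b ∘ ess_iso_inv b = idm _.
Proof. exact (proj2_sig (constructive_indefinite_description _ (ess_iso_is_iso b))). Qed.

Definition fmap_preimage a b (k : hom (F a) (F b)) : hom a b :=
  proj1_sig (constructive_indefinite_description _ (F_full k)).

Lemma fmap_preimageK a b (k : hom (F a) (F b)) : fmap F (fmap_preimage k) = k.
Proof. exact (proj2_sig (constructive_indefinite_description _ (F_full k))). Qed.

Definition pseudo_inverse_map b b' (g : hom b b') : hom (ess_preimage b) (ess_preimage b') :=
  fmap_preimage (ess_iso_inv b' ∘ (g ∘ ess_iso b)).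

Definition pseudo_inverse : Functor D C.
Proof.
  refine {| fobj := ess_preimage; fmap := pseudo_inverse_map |}.
  - intros b. apply F_faithful. unfold pseudo_inverse_map.
    rewrite fmap_preimageK, fmap_id, comp_id_l. apply ess_iso_invK.
  - intros b1 b2 b3 g f. apply F_faithful. unfold pseudo_inverse_map.
    rewrite fmap_comp, !fmap_preimageK, <- !comp_assoc. do 2 f_equal.
    rewrite !comp_assoc, (proj2 (ess_iso_invK b2)), comp_id_l. reflexivity.
Defined.

Lemma fully_faithful_ess_surj_equiv : IsEquivalence F.
Proof.
  exists pseudo_inverse, (fun a => fmap_preimage (ess_iso_inv (F a))), ess_iso.
  split; [|split; [|split]].
  - intros a. exists (fmap_preimage (ess_iso (F a))).
    split; apply F_faithful; rewrite fmap_comp, !fmap_preimageK, fmap_id; apply ess_iso_invK.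
  - intros a a' f. apply F_faithful. rewrite !fmap_comp. simpl. unfold pseudo_inverse_map.
    rewrite !fmap_preimageK, <- !comp_assoc. f_equal.
    rewrite (proj2 (ess_iso_invK (F a))), comp_id_r. reflexivity.
  - apply ess_iso_is_iso.
  - intros b b' g. simpl. unfold pseudo_inverse_map. rewrite fmap_preimageK.
    rewrite !comp_assoc, (proj2 (ess_iso_invK b')), comp_id_l. reflexivity.
Qed.
End FullyFaithfulEssSurj.

Section LeftAdjointsIso.
Variables (C B : Category) (F F' : Functor C B) (U : Functor B C)
  (ad : Adjunction F U) (ad' : Adjunction F' U).

Definition ladj_cmp (V : C) : hom (F V) (F' V) :=
  adj_counit ad (F' V) ∘ fmap F (adj_unit ad' V).

Lemma ladj_cmp_nat V W (h : hom V W) : ladj_cmp W ∘ fmap F h = fmap F' h ∘ ladj_cmp V.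
Proof.
  unfold ladj_cmp. rewrite <- comp_assoc, <- fmap_comp, <- (adj_unit_nat ad').
  rewrite fmap_comp, comp_assoc, <- (adj_counit_nat ad), <- comp_assoc. reflexivity.
Qed.

Lemma ladj_cmp_counit b : adj_counit ad' b ∘ ladj_cmp (U b) = adj_counit ad b.
Proof.
  unfold ladj_cmp. rewrite comp_assoc, (adj_counit_nat ad), <- comp_assoc, <- fmap_comp.
  rewrite (adj_triangle_U ad'), fmap_id, comp_id_r. reflexivity.
Qed.

Lemma ladj_cmp_unit V : fmap U (ladj_cmp V) ∘ adj_unit ad V = adj_unit ad' V.
Proof.
  unfold ladj_cmp. rewrite fmap_comp, <- comp_assoc, (adj_unit_nat ad), comp_assoc.
  rewrite (adj_triangle_U ad), comp_id_l. reflexivity.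
Qed.
End LeftAdjointsIso.

Lemma adj_transpose_inj (C B : Category) (F : Functor C B) (U : Functor B C)
  (ad : Adjunction F U) V b (f g : hom (F V) b) :
  fmap U f ∘ adj_unit ad V = fmap U g ∘ adj_unit ad V -> f = g.
Proof.
  intros E.
  assert (K : forall h : hom (F V) b,
             h = adj_counit ad b ∘ fmap F (fmap U h ∘ adj_unit ad V)).
  { intros h. rewrite fmap_comp, comp_assoc, <- (adj_counit_nat ad), <- comp_assoc.
    rewrite (adj_triangle_F ad), comp_id_r. reflexivity. }
  rewrite (K f), (K g), E. reflexivity.
Qed.

Lemma ladj_cmp_iso (C B : Category) (F F' : Functor C B) (U : Functor B C)
  (ad : Adjunction F U) (ad' : Adjunction F' U) V : is_iso (ladj_cmp ad ad' V).
Proof.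
  exists (ladj_cmp ad' ad V).
  split; [apply (adj_transpose_inj (ad := ad)) | apply (adj_transpose_inj (ad := ad'))];
    rewrite fmap_comp, <- comp_assoc, !ladj_cmp_unit, fmap_id, comp_id_l; reflexivity.
Qed.

Section Products.
Variable L : FinLimCat.

Definition prod (a b : L) : L := pb_ob (pullback (term_hom a) (term_hom b)).
Definition pr1 (a b : L) : hom (prod a b) a := pb_p1 _.
Definition pr2 (a b : L) : hom (prod a b) b := pb_p2 _.

Lemma term_comm (a b w : L) (u : hom w a) (v : hom w b) : term_hom a ∘ u = term_hom b ∘ v.
Proof. apply term_uniq. Qed.

Definition tpair (a b w : L) (u : hom w a) (v : hom w b) : hom w (prod a b) :=
  pb_pair _ u v (term_comm u v).

Lemma pr1_tpair (a b w : L) (u : hom w a) (v : hom w b) : pr1 a b ∘ tpair u v = u.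
Proof. apply pb_pair_p1. Qed.

Lemma pr2_tpair (a b w : L) (u : hom w a) (v : hom w b) : pr2 a b ∘ tpair u v = v.
Proof. apply pb_pair_p2. Qed.

Lemma prod_ext (a b w : L) (u v : hom w (prod a b)) :
  pr1 a b ∘ u = pr1 a b ∘ v -> pr2 a b ∘ u = pr2 a b ∘ v -> u = v.
Proof. apply pb_uniq. Qed.

Lemma tpair_comp (a b w w' : L) (u : hom w a) (v : hom w b) (k : hom w' w) :
  tpair u v ∘ k = tpair (u ∘ k) (v ∘ k).
Proof. apply pb_pair_comp; reflexivity. Qed.

Lemma tpair_ext (a b w : L) (u u' : hom w a) (v v' : hom w b) :
  u = u' -> v = v' -> tpair u v = tpair u' v'.
Proof. intros -> ->. reflexivity. Qed.

Definition times (s a b : L) (f : hom a b) : hom (prod s a) (prod s b) :=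
  tpair (pr1 s a) (f ∘ pr2 s a).

Lemma times_pr1 (s a b : L) (f : hom a b) : pr1 s b ∘ times s f = pr1 s a.
Proof. apply pr1_tpair. Qed.
End Products.
Arguments pr1 {L a b}.
Arguments pr2 {L a b}.

Ltac psimp := repeat progress (rewrite <- ?comp_assoc;
  rewrite ?tpair_comp, ?pr1_tpair, ?pr2_tpair, ?comp_id_l, ?comp_id_r).

Lemma times_id (L : FinLimCat) (s a : L) : times s (idm a) = idm _.
Proof. unfold times. apply prod_ext; psimp; reflexivity. Qed.

Lemma times_comp (L : FinLimCat) (s a b c : L) (g : hom b c) (f : hom a b) :
  times s (g ∘ f) = times s g ∘ times s f.
Proof. unfold times. apply prod_ext; psimp; reflexivity. Qed.

Section SlicedEquivalence.
Variables (A P : FinLimCat) (D : Functor A P) (S : A).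
Hypothesis DS_equiv : IsEquivalence (sliced_functor D S).

Lemma sliced_faithful (V W : A) (v : hom V S) (w : hom W S) (h k : hom V W) :
  w ∘ h = v -> w ∘ k = v -> fmap D h = fmap D k -> h = k.
Proof.
  intros Hh Hk E.
  pose (hh := exist (fun h0 => w ∘ h0 = v) h Hh : @hom (Slice S) (existT _ V v) (existT _ W w)).
  pose (kk := exist (fun h0 => w ∘ h0 = v) k Hk : @hom (Slice S) (existT _ V v) (existT _ W w)).
  assert (E2 : hh = kk) by (apply (equiv_faithful DS_equiv), sl_hom_eq; exact E).
  exact (f_equal (@proj1_sig _ _) E2).
Qed.

Lemma sliced_full (V W : A) (v : hom V S) (w : hom W S) (m : hom (D V) (D W)) :
  fmap D w ∘ m = fmap D v -> exists h, w ∘ h = v /\ fmap D h = m.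
Proof.
  intros Hm.
  pose (mm := exist _ m Hm : @hom (Slice (D S)) (sliced_functor D S (existT _ V v))
                                   (sliced_functor D S (existT _ W w))).
  destruct (equiv_full DS_equiv mm) as [hh Ehh].
  exists (proj1_sig hh). split; [exact (proj2_sig hh) | exact (f_equal (@proj1_sig _ _) Ehh)].
Qed.

Lemma sliced_ess_surj (Z : P) (z : hom Z (D S)) :
  exists (V : A) (v : hom V S) (j : hom (D V) Z), z ∘ j = fmap D v /\ is_iso j.
Proof.
  destruct (equiv_ess_surj DS_equiv (existT _ Z z)) as [[V v] [j [k [Hk1 Hk2]]]].
  exists V, v, (proj1_sig j). split; [exact (proj2_sig j)|].
  exists (proj1_sig k).
  split; [exact (f_equal (@proj1_sig _ _) Hk1) | exact (f_equal (@proj1_sig _ _) Hk2)].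
Qed.

Lemma sliced_cover (Y : A) (y : hom Y S) (W : P) (h : hom W (D Y)) :
  exists (V : A) (j : hom (D V) W) (h' : hom V Y), is_iso j /\ h ∘ j = fmap D h'.
Proof.
  destruct (sliced_ess_surj (fmap D y ∘ h)) as (V & v & j & Hj & Ij).
  destruct (@sliced_full V Y v y (h ∘ j)) as (h' & _ & E).
  { rewrite comp_assoc. exact Hj. }
  exists V, j, h'. auto.
Qed.

Lemma sliced_lift (X Y V : A) (x : hom X S) (y : hom Y S) (u : hom V X)
  (W : P) (j : hom (D V) W) (g : hom W (D X)) (f : hom W (D Y)) :
  fmap D x ∘ g = fmap D y ∘ f -> g ∘ j = fmap D u ->
  exists f', x ∘ u = y ∘ f' /\ f ∘ j = fmap D f'.
Proof.
  intros Hgf Hu.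
  destruct (@sliced_full V Y (x ∘ u) y (f ∘ j)) as (f' & E1 & E2).
  { rewrite comp_assoc, <- Hgf, <- comp_assoc, Hu, fmap_comp. reflexivity. }
  exists f'. auto.
Qed.

Section PullbackPreservation.
Variables (X Y : A) (f : hom X S) (g : hom Y S).
Local Notation XY := (pullback f g).
Local Notation DXY := (pullback (fmap D f) (fmap D g)).

Lemma pb_cmp_comm : fmap D f ∘ fmap D (pb_p1 XY) = fmap D g ∘ fmap D (pb_p2 XY).
Proof. rewrite <- !fmap_comp, pb_comm. reflexivity. Qed.

Definition pb_cmp : hom (D (pb_ob XY)) (pb_ob DXY) := pb_pair _ _ _ pb_cmp_comm.

Lemma pb_cmp_p1 : pb_p1 DXY ∘ pb_cmp = fmap D (pb_p1 XY).
Proof. apply pb_pair_p1. Qed.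

Lemma pb_cmp_p2 : pb_p2 DXY ∘ pb_cmp = fmap D (pb_p2 XY).
Proof. apply pb_pair_p2. Qed.

Lemma pb_cmp_section : exists s, pb_cmp ∘ s = idm _.
Proof.
  destruct (sliced_cover f (pb_p1 DXY)) as (V & j & a & [ji [_ Hji]] & Ha).
  destruct (@sliced_lift X Y V f g a _ j _ _ (pb_comm DXY) Ha) as (b & Hab & Hb').
  exists (fmap D (pb_pair XY a b Hab) ∘ ji).
  apply pb_uniq; rewrite comp_id_r, !comp_assoc.
  - rewrite pb_cmp_p1, <- fmap_comp, pb_pair_p1, <- Ha. apply (cancel_r _ Hji).
  - rewrite pb_cmp_p2, <- fmap_comp, pb_pair_p2, <- Hb'. apply (cancel_r _ Hji).
Qed.

(* A section [s] of [pb_cmp] is also a retraction: [s ∘ pb_cmp] lies over [D S],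
   hence is the image of an endomorphism of [X ×_S Y] fixing both projections. *)
Lemma pb_cmp_iso : is_iso pb_cmp.
Proof.
  destruct pb_cmp_section as [s Hs]. exists s. split; [|exact Hs].
  assert (Hp1 : fmap D (pb_p1 XY) ∘ (s ∘ pb_cmp) = fmap D (pb_p1 XY)).
  { rewrite <- pb_cmp_p1, comp_assoc, <- (comp_assoc _ pb_cmp s), Hs, comp_id_r. reflexivity. }
  assert (Hp2 : fmap D (pb_p2 XY) ∘ (s ∘ pb_cmp) = fmap D (pb_p2 XY)).
  { rewrite <- pb_cmp_p2, comp_assoc, <- (comp_assoc _ pb_cmp s), Hs, comp_id_r. reflexivity. }
  destruct (@sliced_full _ _ (f ∘ pb_p1 XY) (f ∘ pb_p1 XY) (s ∘ pb_cmp)) as (w & Hw & Ew).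
  { rewrite fmap_comp, <- comp_assoc, Hp1. reflexivity. }
  rewrite <- Ew, <- fmap_id. f_equal.
  apply pb_uniq; rewrite comp_id_r.
  - apply (@sliced_faithful _ _ (f ∘ pb_p1 XY) f); [rewrite comp_assoc; exact Hw | reflexivity |].
    rewrite fmap_comp, Ew. exact Hp1.
  - apply (@sliced_faithful _ _ (f ∘ pb_p1 XY) g);
      [rewrite comp_assoc, <- pb_comm; exact Hw | apply eq_sym, pb_comm |].
    rewrite fmap_comp, Ew. exact Hp2.
Qed.

Definition pb_cmp_inv : hom (pb_ob DXY) (D (pb_ob XY)) :=
  proj1_sig (constructive_indefinite_description _ pb_cmp_iso).

Lemma pb_cmp_invK : pb_cmp_inv ∘ pb_cmp = idm _ /\ pb_cmp ∘ pb_cmp_inv = idm _.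
Proof. exact (proj2_sig (constructive_indefinite_description _ pb_cmp_iso)). Qed.

Lemma pb_cmp_inv_pair (W : P) (V : A) (a : hom W (D X)) (b : hom W (D Y)) H
  (j : hom (D V) W) (α : hom V X) (β : hom V Y) (H' : f ∘ α = g ∘ β) :
  a ∘ j = fmap D α -> b ∘ j = fmap D β ->
  pb_cmp_inv ∘ pb_pair DXY a b H ∘ j = fmap D (pb_pair XY α β H').
Proof.
  intros Ea Eb.
  assert (E : pb_pair DXY a b H ∘ j = pb_cmp ∘ fmap D (pb_pair XY α β H')).
  { apply pb_uniq; rewrite !comp_assoc.
    - rewrite pb_pair_p1, pb_cmp_p1, <- fmap_comp, pb_pair_p1. exact Ea.
    - rewrite pb_pair_p2, pb_cmp_p2, <- fmap_comp, pb_pair_p2. exact Eb. }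
  rewrite <- comp_assoc, E, (cancel_l _ (proj1 pb_cmp_invK)). reflexivity.
Qed.

Lemma pb_cmp_inv_p1 : fmap D (pb_p1 XY) ∘ pb_cmp_inv = pb_p1 DXY.
Proof. rewrite <- pb_cmp_p1, <- comp_assoc, (proj2 pb_cmp_invK), comp_id_r. reflexivity. Qed.

Lemma pb_cmp_inv_p2 : fmap D (pb_p2 XY) ∘ pb_cmp_inv = pb_p2 DXY.
Proof. rewrite <- pb_cmp_p2, <- comp_assoc, (proj2 pb_cmp_invK), comp_id_r. reflexivity. Qed.
End PullbackPreservation.
End SlicedEquivalence.

Section GaloisGroupoid.
Variables (A P : FinLimCat) (D : Functor A P) (S : A).
Hypothesis DS_equiv : IsEquivalence (sliced_functor D S).
Local Notation S2 := (prod S S).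
Local Notation PB a := (pullback (fmap D (@pr2 _ S S)) (fmap D (@pr1 _ S a))).

(* The pair groupoid [S × S ⇉ S] acts on [S × a] by [((t, s), (s, x)) |-> (t, x)];
   its image under [D] is the action of the Galois groupoid on [D (S × a)]. *)
Definition act_map (a : A) : hom (pb_ob (pullback (@pr2 _ S S) (@pr1 _ S a))) (prod S a) :=
  tpair (pr1 ∘ pb_p1 _) (pr2 ∘ pb_p2 _).

Lemma act_map_pair (a V : A) (α : hom V S2) (β : hom V (prod S a)) H :
  act_map a ∘ pb_pair _ α β H = tpair (pr1 ∘ α) (pr2 ∘ β).
Proof.
  unfold act_map. rewrite tpair_comp. apply tpair_ext.
  - rewrite <- comp_assoc, pb_pair_p1. reflexivity.
  - rewrite <- comp_assoc, pb_pair_p2. reflexivity.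
Qed.

Definition act (a : A) : hom (pb_ob (PB a)) (D (prod S a)) :=
  fmap D (act_map a) ∘ pb_cmp_inv DS_equiv (@pr2 _ S S) (@pr1 _ S a).

Lemma act_cover (a : A) (W : P) (V : A) (g : hom W (D S2)) (x : hom W (D (prod S a))) H
  (j : hom (D V) W) (α : hom V S2) (β : hom V (prod S a)) (H' : pr2 ∘ α = pr1 ∘ β) :
  g ∘ j = fmap D α -> x ∘ j = fmap D β ->
  act a ∘ pb_pair (PB a) g x H ∘ j = fmap D (tpair (pr1 ∘ α) (pr2 ∘ β)).
Proof.
  intros Ea Eb. rewrite <- (act_map_pair H'), fmap_comp. unfold act.
  rewrite <- (pb_cmp_inv_pair DS_equiv H H' Ea Eb), !comp_assoc. reflexivity.
Qed.

Lemma act_fmap (a V : A) (g : hom (D V) (D S2)) (x : hom (D V) (D (prod S a))) H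
  (α : hom V S2) (β : hom V (prod S a)) (H' : pr2 ∘ α = pr1 ∘ β) :
  g = fmap D α -> x = fmap D β ->
  act a ∘ pb_pair (PB a) g x H = fmap D (tpair (pr1 ∘ α) (pr2 ∘ β)).
Proof.
  intros E1 E2. rewrite <- (act_cover H (j := idm _) H'); rewrite comp_id_r; auto.
Qed.

Lemma act_pr1 (a : A) : fmap D pr1 ∘ act a = fmap D pr1 ∘ pb_p1 (PB a).
Proof.
  unfold act, act_map. rewrite comp_assoc, <- fmap_comp, pr1_tpair, fmap_comp, <- comp_assoc.
  rewrite pb_cmp_inv_p1. reflexivity.
Qed.

Lemma act_pr2 (a : A) : fmap D pr2 ∘ act a = fmap D pr2 ∘ pb_p2 (PB a).
Proof.
  unfold act, act_map. rewrite comp_assoc, <- fmap_comp, pr2_tpair, fmap_comp, <- comp_assoc.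
  rewrite pb_cmp_inv_p2. reflexivity.
Qed.

Definition gpd_id : hom (D S) (D S2) := fmap D (tpair (idm S) (idm S)).
Definition gpd_inv : hom (D S2) (D S2) := fmap D (tpair pr2 pr1).

Lemma act_unit (a : A) W (x : hom W (D (prod S a)))
  (H : fmap D pr2 ∘ (gpd_id ∘ (fmap D pr1 ∘ x)) = fmap D pr1 ∘ x) :
  act a ∘ pb_pair (PB a) (gpd_id ∘ (fmap D pr1 ∘ x)) x H = x.
Proof.
  destruct (sliced_cover DS_equiv pr1 x) as (V & j & x' & Ij & Hx).
  apply (iso_epi Ij).
  assert (K : pr2 ∘ (tpair (idm S) (idm S) ∘ (pr1 ∘ x')) = pr1 ∘ x')
    by (psimp; reflexivity).
  rewrite (act_cover H K), Hx.
  - f_equal. apply prod_ext; psimp; reflexivity.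
  - unfold gpd_id. rewrite <- !comp_assoc, Hx, <- !fmap_comp. reflexivity.
  - exact Hx.
Qed.

Lemma act_assoc (a : A) W (g f : hom W (D S2)) (x : hom W (D (prod S a)))
  (H1 : fmap D pr2 ∘ g = fmap D pr1 ∘ f) (H2 : fmap D pr2 ∘ f = fmap D pr1 ∘ x)
  (H3 : fmap D pr2 ∘ (act S ∘ pb_pair (PB S) g f H1) = fmap D pr1 ∘ x)
  (H4 : fmap D pr2 ∘ g = fmap D pr1 ∘ (act a ∘ pb_pair (PB a) f x H2)) :
  act a ∘ pb_pair (PB a) (act S ∘ pb_pair (PB S) g f H1) x H3 =
  act a ∘ pb_pair (PB a) g (act a ∘ pb_pair (PB a) f x H2) H4.
Proof.
  destruct (sliced_cover DS_equiv pr1 g) as (V & j & g' & Ij & Hg).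
  destruct (sliced_lift DS_equiv H1 Hg) as (f' & K1 & Hf).
  destruct (sliced_lift DS_equiv H2 Hf) as (x' & K2 & Hx).
  apply (iso_epi Ij).
  assert (K3 : pr2 ∘ tpair (pr1 ∘ g') (pr2 ∘ f') = pr1 ∘ x') by (psimp; exact K2).
  assert (K4 : pr2 ∘ g' = pr1 ∘ tpair (pr1 ∘ f') (pr2 ∘ x')) by (psimp; exact K1).
  rewrite (act_cover H3 K3 (act_cover H1 K1 Hg Hf) Hx),
          (act_cover H4 K4 Hg (act_cover H2 K2 Hf Hx)).
  f_equal. psimp. reflexivity.
Qed.

Lemma gpd_comp_id_r W (g : hom W (D S2))
  (H : fmap D pr2 ∘ g = fmap D pr1 ∘ (gpd_id ∘ (fmap D pr2 ∘ g))) :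
  act S ∘ pb_pair (PB S) g (gpd_id ∘ (fmap D pr2 ∘ g)) H = g.
Proof.
  destruct (sliced_cover DS_equiv pr1 g) as (V & j & g' & Ij & Hg).
  apply (iso_epi Ij).
  assert (K : pr2 ∘ g' = pr1 ∘ (tpair (idm S) (idm S) ∘ (pr2 ∘ g')))
    by (psimp; reflexivity).
  rewrite (act_cover H K Hg), Hg.
  - f_equal. apply prod_ext; psimp; reflexivity.
  - unfold gpd_id. rewrite <- !comp_assoc, Hg, <- !fmap_comp. reflexivity.
Qed.

Lemma gpd_inv_l W (g : hom W (D S2)) (H : fmap D pr2 ∘ (gpd_inv ∘ g) = fmap D pr1 ∘ g) :
  act S ∘ pb_pair (PB S) (gpd_inv ∘ g) g H = gpd_id ∘ (fmap D pr2 ∘ g).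
Proof.
  destruct (sliced_cover DS_equiv pr1 g) as (V & j & g' & Ij & Hg).
  apply (iso_epi Ij).
  assert (K : pr2 ∘ (tpair pr2 pr1 ∘ g') = pr1 ∘ g') by (psimp; reflexivity).
  rewrite (act_cover H K).
  - unfold gpd_id. rewrite <- !comp_assoc, Hg, <- !fmap_comp. f_equal. psimp. reflexivity.
  - unfold gpd_inv. rewrite <- comp_assoc, Hg, <- fmap_comp. reflexivity.
  - exact Hg.
Qed.

Lemma gpd_inv_r W (g : hom W (D S2)) (H : fmap D pr2 ∘ g = fmap D pr1 ∘ (gpd_inv ∘ g)) :
  act S ∘ pb_pair (PB S) g (gpd_inv ∘ g) H = gpd_id ∘ (fmap D pr1 ∘ g).
Proof.
  destruct (sliced_cover DS_equiv pr1 g) as (V & j & g' & Ij & Hg).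
  apply (iso_epi Ij).
  assert (K : pr2 ∘ g' = pr1 ∘ (tpair pr2 pr1 ∘ g')) by (psimp; reflexivity).
  rewrite (act_cover H K Hg).
  - unfold gpd_id. rewrite <- !comp_assoc, Hg, <- !fmap_comp. f_equal. psimp. reflexivity.
  - unfold gpd_inv. rewrite <- comp_assoc, Hg, <- fmap_comp. reflexivity.
Qed.

Lemma gpd_src_id : fmap D pr2 ∘ gpd_id = idm (D S).
Proof. unfold gpd_id. rewrite <- fmap_comp, pr2_tpair, fmap_id. reflexivity. Qed.

Lemma gpd_tgt_id : fmap D pr1 ∘ gpd_id = idm (D S).
Proof. unfold gpd_id. rewrite <- fmap_comp, pr1_tpair, fmap_id. reflexivity. Qed.

Lemma gpd_src_inv : fmap D pr2 ∘ gpd_inv = fmap D pr1.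
Proof. unfold gpd_inv. rewrite <- fmap_comp, pr2_tpair. reflexivity. Qed.

Lemma gpd_tgt_inv : fmap D pr1 ∘ gpd_inv = fmap D pr2.
Proof. unfold gpd_inv. rewrite <- fmap_comp, pr1_tpair. reflexivity. Qed.

(* Composition is the action of the groupoid on its own arrows [D (S × S)]. *)
Definition galois_groupoid : InternalGroupoid P :=
  {| g0 := D S; g1 := D S2; gsrc := fmap D pr2; gtgt := fmap D pr1; gid := gpd_id;
     gcomp := act S; ginv := gpd_inv;
     gsrc_id := gpd_src_id; gtgt_id := gpd_tgt_id;
     gsrc_comp := act_pr2 S; gtgt_comp := act_pr1 S;
     gcomp_id_l := @act_unit S; gcomp_id_r := gpd_comp_id_r; gcomp_assoc := @act_assoc S;
     gsrc_inv := gpd_src_inv; gtgt_inv := gpd_tgt_inv;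
     ginv_l := gpd_inv_l; ginv_r := gpd_inv_r |}.

Local Notation G := galois_groupoid.

Definition galois_obj (a : A) : gobj G :=
  @Build_gobj P G (D (prod S a)) (fmap D pr1) (act a) (act_pr1 a) (@act_unit a) (@act_assoc a).

Lemma times_equivariant (a b : A) (f : hom a b) :
  @is_equivariant _ G (galois_obj a) (galois_obj b) (fmap D (times S f)).
Proof.
  split; [simpl; rewrite <- fmap_comp, times_pr1; reflexivity|].
  intros W g x H H'. simpl in *.
  destruct (sliced_cover DS_equiv pr1 g) as (V & j & g' & Ij & Hg).
  destruct (sliced_lift DS_equiv H Hg) as (x' & K1 & Hx).
  assert (K2 : pr2 ∘ g' = pr1 ∘ (times S f ∘ x'))
    by (rewrite comp_assoc, times_pr1; exact K1).
  assert (Hfx : fmap D (times S f) ∘ x ∘ j = fmap D (times S f ∘ x'))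
    by (rewrite <- comp_assoc, Hx; apply fmap_comp_eq; reflexivity).
  apply (iso_epi Ij).
  rewrite <- comp_assoc, (act_cover H K1 Hg Hx), (act_cover H' K2 Hg Hfx).
  apply fmap_comp_eq. unfold times. psimp. reflexivity.
Qed.

Definition galois_map (a b : A) (f : hom a b) : gobj_hom (galois_obj a) (galois_obj b) :=
  exist _ (fmap D (times S f)) (times_equivariant f).

Definition galois_functor : Functor A (GObjCat G).
Proof.
  refine (@Build_Functor A (GObjCat G) galois_obj galois_map _ _).
  - intros a. apply gobj_hom_eq. simpl. rewrite times_id. apply fmap_id.
  - intros a b c g f. apply gobj_hom_eq. simpl. rewrite times_comp. apply fmap_comp.
Defined.
End GaloisGroupoid.

Section Sigma.
Variables (A : FinLimCat) (S : A).
Local Notation U := (pullback_functor (term_hom S)).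

Definition sigma_obj (V : Slice S) : Slice (@term A) := existT _ (projT1 V) (term_hom _).

Definition sigma_map (V W : Slice S) (h : hom V W) : hom (sigma_obj V) (sigma_obj W) :=
  exist _ (proj1_sig h) (term_uniq _ _).

Definition sigma : Functor (Slice S) (Slice (@term A)).
Proof.
  refine (@Build_Functor (Slice S) (Slice (@term A)) sigma_obj sigma_map _ _);
    intros; apply sl_hom_eq; reflexivity.
Defined.

Definition sigma_unit (V : Slice S) : hom V (U (sigma V)) :=
  exist _ (pb_pair (pullback (term_hom S) (term_hom (projT1 V))) (projT2 V) (idm _) (term_uniq _ _))
    (pb_pair_p1 _ _ _ _).

Definition sigma_counit (b : Slice (@term A)) : hom (sigma (U b)) b :=
  exist _ (pb_p2 (pullback (term_hom S) (projT2 b))) (term_uniq _ _).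

Definition sigma_adj : Adjunction sigma U.
Proof.
  refine (@Build_Adjunction _ _ sigma U sigma_unit sigma_counit _ _ _ _).
  - intros V W f. apply sl_hom_eq. simpl. apply pb_uniq.
    + rewrite !comp_assoc, !pb_pair_p1. exact (eq_sym (proj2_sig f)).
    + rewrite !comp_assoc, !pb_pair_p2, <- comp_assoc, pb_pair_p2, comp_id_r, comp_id_l.
      reflexivity.
  - intros b b' g. apply sl_hom_eq. simpl. rewrite pb_pair_p2. reflexivity.
  - intros V. apply sl_hom_eq. simpl. apply pb_pair_p2.
  - intros b. apply sl_hom_eq. simpl. apply pb_uniq.
    + rewrite comp_id_r, !comp_assoc, !pb_pair_p1. reflexivity.
    + rewrite comp_id_r, !comp_assoc, !pb_pair_p2, <- comp_assoc, pb_pair_p2, comp_id_r.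
      reflexivity.
Defined.

Definition term_slice (a : A) : Slice (@term A) := existT _ a (term_hom a).

Lemma fmap_pbf_term (a b : A) (h : hom (term_slice a) (term_slice b)) :
  proj1_sig (fmap U h) = times S (proj1_sig h).
Proof. apply pb_pair_ext; reflexivity. Qed.

Lemma fmap_pbf_sigma (V W : Slice S) (h : hom V W) :
  proj1_sig (fmap U (fmap sigma h)) = times S (proj1_sig h).
Proof. apply pb_pair_ext; reflexivity. Qed.

Lemma fmap_pbf_sigma_counit (a : A) :
  proj1_sig (fmap U (sigma_counit (term_slice a))) = times S (@pr2 _ S a).
Proof. apply pb_pair_ext; reflexivity. Qed.
End Sigma.

Section Monadicity.
Variables (A : FinLimCat) (S : A).
Local Notation U := (pullback_functor (term_hom S)).
Variables (F : Functor (Slice S) (Slice (@term A))) (adjF : Adjunction F U).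
Hypothesis cmp_equiv : IsEquivalence (comparison adjF).
Local Notation cmp := (ladj_cmp adjF (sigma_adj S)).

(* Algebra structures for [S^* F] transported from those for [S^* Σ_S = S × -]
   along the canonical isomorphism [F ≅ Σ_S]. *)
Definition alg_of (V : Slice S) (ξ : hom (U (sigma S V)) V) : hom (U (F V)) V :=
  ξ ∘ fmap U (cmp V).

Lemma alg_of_hom (V W : Slice S) (ξ : hom (U (sigma S V)) V) (ζ : hom (U (sigma S W)) W)
  (h : hom V W) :
  h ∘ ξ = ζ ∘ fmap U (fmap (sigma S) h) <-> h ∘ alg_of ξ = alg_of ζ ∘ fmap U (fmap F h).
Proof.
  assert (Hnat : fmap U (cmp W) ∘ fmap U (fmap F h) =
                 fmap U (fmap (sigma S) h) ∘ fmap U (cmp V))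
    by (rewrite <- !fmap_comp; f_equal; apply ladj_cmp_nat).
  unfold alg_of. rewrite <- comp_assoc, Hnat, !comp_assoc. split.
  - intros E. rewrite E. reflexivity.
  - apply iso_epi, fmap_iso, ladj_cmp_iso.
Qed.

Lemma comparison_str (b : Slice (@term A)) :
  alg_str (comparison adjF b) = alg_of (fmap U (sigma_counit S b)).
Proof.
  change (fmap U (adj_counit adjF b) = alg_of (fmap U (sigma_counit S b))).
  rewrite <- (ladj_cmp_counit adjF (sigma_adj S) b), fmap_comp. reflexivity.
Qed.

Section DescentAlgebra.
Variables (V : Slice S) (ξ : hom (U (sigma S V)) V).
Hypothesis ξ_unit : ξ ∘ sigma_unit V = idm V.
Hypothesis ξ_assoc :
  ξ ∘ fmap U (fmap (sigma S) ξ) = ξ ∘ fmap U (sigma_counit S (sigma S V)).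

Lemma alg_of_unit : alg_of ξ ∘ adj_unit adjF V = idm V.
Proof.
  unfold alg_of. rewrite <- comp_assoc, ladj_cmp_unit. exact ξ_unit.
Qed.

Lemma alg_of_mult :
  alg_of ξ ∘ fmap U (fmap F (alg_of ξ)) = alg_of ξ ∘ fmap U (adj_counit adjF (F V)).
Proof.
  symmetry. change (fmap U (adj_counit adjF (F V))) with (alg_str (comparison adjF (F V))).
  rewrite comparison_str. apply alg_of_hom.
  unfold alg_of. rewrite !fmap_comp, comp_assoc, ξ_assoc, <- !comp_assoc. f_equal.
  rewrite <- !fmap_comp. f_equal. apply (adj_counit_nat (sigma_adj S)).
Qed.

Definition descent_alg : EM adjF :=
  {| alg_ob := V; alg_str := alg_of ξ; alg_unit := alg_of_unit; alg_mult := alg_of_mult |}.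
End DescentAlgebra.

Lemma times_inj (a b : A) (f g : hom a b) : times S f = times S g -> f = g.
Proof.
  intros E.
  pose (f' := exist (fun h => term_hom b ∘ h = term_hom a) f (term_uniq _ _)
         : hom (term_slice a) (term_slice b)).
  pose (g' := exist (fun h => term_hom b ∘ h = term_hom a) g (term_uniq _ _)
         : hom (term_slice a) (term_slice b)).
  assert (E' : f' = g').
  { apply (equiv_faithful cmp_equiv), em_hom_eq, sl_hom_eq.
    change (proj1_sig (fmap U f') = proj1_sig (fmap U g')).
    rewrite !fmap_pbf_term. exact E. }
  exact (f_equal (@proj1_sig _ _) E').
Qed.

Lemma descent_hom_times (a b : A) (h : hom (prod S a) (prod S b)) :
  pr1 ∘ h = pr1 -> h ∘ times S pr2 = times S pr2 ∘ times S h -> exists f, times S f = h.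
Proof.
  intros Hh1 Hd.
  pose (hh := exist _ h Hh1 : hom (U (term_slice a)) (U (term_slice b))).
  assert (Halg : hh ∘ alg_str (comparison adjF (term_slice a)) =
                 alg_str (comparison adjF (term_slice b)) ∘ fmap U (fmap F hh)).
  { rewrite !comparison_str. apply alg_of_hom, sl_hom_eq.
    change (h ∘ proj1_sig (fmap U (sigma_counit S (term_slice a))) =
            proj1_sig (fmap U (sigma_counit S (term_slice b))) ∘
            proj1_sig (fmap U (fmap (sigma S) hh))).
    rewrite fmap_pbf_sigma, !fmap_pbf_sigma_counit. exact Hd. }
  destruct (equiv_full cmp_equiv (exist _ hh Halg : hom (comparison adjF _) (comparison adjF _)))
    as [f Ef].
  exists (proj1_sig f). etransitivity; [symmetry; apply fmap_pbf_term|].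
  exact (f_equal (fun k => proj1_sig (proj1_sig k)) Ef).
Qed.

Lemma descent_effective (V : A) (v : hom V S) (ξ : hom (prod S V) V) :
  v ∘ ξ = pr1 -> ξ ∘ tpair v (idm V) = idm V -> ξ ∘ times S ξ = ξ ∘ times S pr2 ->
  exists a (e : hom (prod S a) V),
    is_iso e /\ v ∘ e = pr1 /\ e ∘ times S pr2 = ξ ∘ times S e.
Proof.
  intros Hv Hu Ha.
  pose (Vs := existT _ V v : Slice S).
  pose (ξs := exist _ ξ Hv : hom (U (sigma S Vs)) Vs).
  assert (Hus : ξs ∘ sigma_unit Vs = idm Vs).
  { apply sl_hom_eq. etransitivity; [|exact Hu]. simpl. f_equal. apply pb_pair_ext; reflexivity. }
  assert (Has : ξs ∘ fmap U (fmap (sigma S) ξs) = ξs ∘ fmap U (sigma_counit S (sigma S Vs))).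
  { apply sl_hom_eq.
    change (ξ ∘ proj1_sig (fmap U (fmap (sigma S) ξs)) =
            ξ ∘ proj1_sig (fmap U (sigma_counit S (term_slice V)))).
    rewrite fmap_pbf_sigma, fmap_pbf_sigma_counit. exact Ha. }
  destruct (equiv_ess_surj cmp_equiv (descent_alg Hus Has)) as [[a t] [e Ie]].
  assert (Et : t = term_hom a) by apply term_uniq. subst t.
  exists a, (proj1_sig (proj1_sig e)). split; [|split].
  - destruct Ie as [e2 [E1 E2]]. exists (proj1_sig (proj1_sig e2)).
    split; [exact (f_equal (fun k => proj1_sig (proj1_sig k)) E1)
           | exact (f_equal (fun k => proj1_sig (proj1_sig k)) E2)].
  - exact (proj2_sig (proj1_sig e)).
  - pose (e0 := proj1_sig e : hom (U (term_slice a)) Vs).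
    assert (He : e0 ∘ alg_of (fmap U (sigma_counit S (term_slice a))) =
                 alg_of ξs ∘ fmap U (fmap F e0))
      by (rewrite <- comparison_str; exact (proj2_sig e)).
    apply alg_of_hom, (f_equal (@proj1_sig _ _)) in He.
    change (proj1_sig e0 ∘ proj1_sig (fmap U (sigma_counit S (term_slice a))) =
            ξ ∘ proj1_sig (fmap U (fmap (sigma S) e0))) in He.
    rewrite fmap_pbf_sigma, fmap_pbf_sigma_counit in He. exact He.
Qed.
End Monadicity.

Lemma gobj_iso (P : FinLimCat) (G : InternalGroupoid P) (x y : gobj G) (k : gobj_hom x y) :
  is_iso (proj1_sig k) -> @is_iso (GObjCat G) x y k.
Proof.
  destruct k as [k [Ka Kq]]. simpl. intros [k' [E1 E2]].
  assert (Q : @is_equivariant _ G y x k').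
  { split.
    - rewrite <- Ka, <- comp_assoc, E2, comp_id_r. reflexivity.
    - intros W g z H H'. apply (iso_mono (f := k' ∘ _) (ex_intro _ k' (conj E1 E2))).
      rewrite comp_assoc, E2, comp_id_l.
      assert (H'' : gsrc G ∘ g = go_anchor y ∘ (k ∘ (k' ∘ z))).
      { rewrite comp_assoc, Ka. exact H'. }
      rewrite (Kq W g (k' ∘ z) H' H''). apply f_equal, pb_pair_ext; auto.
      rewrite comp_assoc, E2, comp_id_l. reflexivity. }
  exists (exist _ k' Q). split; apply gobj_hom_eq; simpl; auto.
Qed.

Section GaloisEquivalence.
Variables (A P : FinLimCat) (D : Functor A P) (S : A).
Hypothesis DS_equiv : IsEquivalence (sliced_functor D S).
Local Notation U := (pullback_functor (term_hom S)).
Variables (F : Functor (Slice S) (Slice (@term A))) (adjF : Adjunction F U).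
Hypothesis cmp_equiv : IsEquivalence (comparison adjF).
Local Notation G := (galois_groupoid DS_equiv).
Local Notation Phi := (galois_functor DS_equiv).

Lemma galois_faithful (a b : A) (f g : hom a b) : fmap Phi f = fmap Phi g -> f = g.
Proof.
  intros E. apply (f_equal (@proj1_sig _ _)) in E. simpl in E.
  apply (times_inj cmp_equiv), (@sliced_faithful _ _ _ _ DS_equiv _ _ pr1 pr1); try apply times_pr1.
  exact E.
Qed.

(* Equivariance tested on the generic composable pair
   [((t, s), (s, x)) : D (S × (S × a))] says that [h] respects descent data. *)
Lemma equivariant_descent_hom (a b : A) (h : hom (prod S a) (prod S b)) :
  pr1 ∘ h = pr1 ->
  @is_equivariant _ G (galois_obj DS_equiv a) (galois_obj DS_equiv b) (fmap D h) ->
  h ∘ times S pr2 = times S pr2 ∘ times S h.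
Proof.
  intros Hh [_ Kq].
  apply (@sliced_faithful _ _ _ _ DS_equiv _ _ pr1 pr1).
  - rewrite comp_assoc, Hh. apply times_pr1.
  - rewrite comp_assoc, times_pr1. apply times_pr1.
  - pose (g := fmap D (tpair (@pr1 _ S (prod S a)) (pr1 ∘ pr2))).
    pose (x := fmap D (@pr2 _ S (prod S a))).
    assert (H : fmap D pr2 ∘ g = fmap D pr1 ∘ x)
      by (unfold g, x; rewrite <- !fmap_comp, pr2_tpair; reflexivity).
    assert (H' : fmap D pr2 ∘ g = fmap D pr1 ∘ (fmap D h ∘ x))
      by (rewrite comp_assoc, <- fmap_comp, Hh; exact H).
    assert (K : pr2 ∘ tpair (@pr1 _ S (prod S a)) (pr1 ∘ pr2) = pr1 ∘ pr2)
      by (psimp; reflexivity).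
    assert (K' : pr2 ∘ tpair (@pr1 _ S (prod S a)) (pr1 ∘ pr2) = pr1 ∘ (h ∘ pr2))
      by (psimp; rewrite comp_assoc, Hh; reflexivity).
    pose proof (Kq _ g x H H') as EQ. simpl in EQ.
    rewrite (act_fmap DS_equiv H K), (act_fmap DS_equiv H' K') in EQ; try reflexivity;
      [|unfold x; apply eq_sym, fmap_comp].
    transitivity (fmap D h ∘ fmap D (tpair (pr1 ∘ tpair (@pr1 _ S (prod S a)) (pr1 ∘ pr2))
                                            (pr2 ∘ pr2))).
    + rewrite <- fmap_comp. unfold times. do 2 f_equal. psimp. reflexivity.
    + rewrite EQ. unfold times. f_equal. psimp. reflexivity.
Qed.

Lemma galois_full (a b : A) (k : hom (Phi a) (Phi b)) : exists f, fmap Phi f = k.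
Proof.
  destruct k as [k Kk]. pose proof Kk as [Ka _].
  destruct (@sliced_full _ _ _ _ DS_equiv _ _ pr1 pr1 k Ka) as (h & Hh & <-).
  destruct (descent_hom_times cmp_equiv Hh (equivariant_descent_hom Hh Kk)) as [f Hf].
  exists f. apply gobj_hom_eq. simpl. rewrite Hf. reflexivity.
Qed.

Section Transport.
Variable X : gobj G.
Local Notation p := (go_anchor X).
Local Notation PBX := (pullback (gsrc G) p).
Variables (V : A) (v : hom V S) (i : hom (D V) (go_ob X)).
Hypothesis i_over : p ∘ i = fmap D v.
Hypothesis i_iso : is_iso i.

Definition transport_arrow : hom (D (prod S V)) (g1 G) := fmap D (tpair pr1 (v ∘ pr2)).

Lemma transport_compat : gsrc G ∘ transport_arrow = p ∘ (i ∘ fmap D pr2).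
Proof.
  change (fmap D pr2 ∘ transport_arrow = p ∘ (i ∘ fmap D pr2)).
  unfold transport_arrow. rewrite comp_assoc, i_over, <- fmap_comp, pr2_tpair. apply fmap_comp.
Qed.

Definition transported_act : hom (D (prod S V)) (go_ob X) :=
  go_act X ∘ pb_pair PBX transport_arrow (i ∘ fmap D pr2) transport_compat.

Lemma transported_act_lift : exists ξ, v ∘ ξ = pr1 /\ i ∘ fmap D ξ = transported_act.
Proof.
  destruct i_iso as [ii [_ Eii]].
  destruct (@sliced_full _ _ _ _ DS_equiv _ _ pr1 v (ii ∘ transported_act))
    as (ξ & ξ_over & ξ_act).
  { unfold transported_act. rewrite <- i_over, !comp_assoc, (cancel_r _ Eii).
    assert (GA : (p : hom (go_ob X) (D S)) ∘ go_act X = fmap D pr1 ∘ pb_p1 PBX)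
      by exact (go_anchor_act X).
    rewrite GA, <- comp_assoc, pb_pair_p1.
    unfold transport_arrow. rewrite <- fmap_comp, pr1_tpair. reflexivity. }
  exists ξ. split; [exact ξ_over|]. rewrite ξ_act. apply (cancel_l _ Eii).
Qed.

Variable ξ : hom (prod S V) V.
Hypothesis ξ_over : v ∘ ξ = pr1.
Hypothesis ξ_act : i ∘ fmap D ξ = transported_act.

Lemma transported_act_cover (W : P) (V' : A) (g : hom W (g1 G)) (x : hom W (go_ob X)) H
  (j : hom (D V') W) (t : hom V' S) (y : hom V' V) :
  g ∘ j = fmap D (tpair t (v ∘ y)) -> x ∘ j = i ∘ fmap D y ->
  go_act X ∘ pb_pair PBX g x H ∘ j = i ∘ fmap D (ξ ∘ tpair t y).
Proof.
  intros Hg Hx.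
  assert (H' : gsrc G ∘ fmap D (tpair t (v ∘ y)) = p ∘ (i ∘ fmap D y)).
  { change (fmap D pr2 ∘ fmap D (tpair t (v ∘ y)) = p ∘ (i ∘ fmap D y)).
    rewrite comp_assoc, i_over, <- fmap_comp, pr2_tpair. apply fmap_comp. }
  rewrite <- comp_assoc, (pb_pair_comp _ _ H' Hg Hx).
  rewrite fmap_comp, comp_assoc, ξ_act. unfold transported_act. rewrite <- comp_assoc. f_equal.
  symmetry. apply pb_pair_comp.
  - unfold transport_arrow. apply fmap_comp_eq. psimp. reflexivity.
  - rewrite <- comp_assoc, <- fmap_comp, pr2_tpair. reflexivity.
Qed.

Lemma transported_act_fmap (V' : A) (g : hom (D V') (g1 G)) (x : hom (D V') (go_ob X)) H
  (t : hom V' S) (y : hom V' V) :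
  g = fmap D (tpair t (v ∘ y)) -> x = i ∘ fmap D y ->
  go_act X ∘ pb_pair PBX g x H = i ∘ fmap D (ξ ∘ tpair t y).
Proof.
  intros Hg Hx. rewrite <- (transported_act_cover H (j := idm _)); rewrite comp_id_r; auto.
Qed.

Lemma transported_unit : ξ ∘ tpair v (idm V) = idm V.
Proof.
  apply (@sliced_faithful _ _ _ _ DS_equiv _ _ v v);
    [rewrite comp_assoc, ξ_over; apply pr1_tpair | apply comp_id_r |].
  apply (iso_mono i_iso).
  assert (Hu : gsrc G ∘ (gid G ∘ (p ∘ i)) = p ∘ i)
    by (rewrite comp_assoc, (gsrc_id G), comp_id_l; reflexivity).
  rewrite <- (transported_act_fmap Hu (t := v) (y := idm V)), (go_unit Hu), fmap_id, comp_id_r.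
  - reflexivity.
  - rewrite i_over. apply fmap_comp_eq. apply prod_ext; psimp; reflexivity.
  - rewrite fmap_id. apply eq_sym, comp_id_r.
Qed.

(* Associativity of the action on [(t, s) ∘ (s, v y)] acting on [i y]. *)
Lemma transported_assoc : ξ ∘ times S ξ = ξ ∘ times S pr2.
Proof.
  apply (@sliced_faithful _ _ _ _ DS_equiv _ _ pr1 v);
    [rewrite comp_assoc, ξ_over; apply times_pr1 | rewrite comp_assoc, ξ_over; apply times_pr1 |].
  apply (iso_mono i_iso).
  set (t := @pr1 _ S (prod S V)). set (s := pr1 ∘ @pr2 _ S (prod S V)).
  set (y := pr2 ∘ @pr2 _ S (prod S V)).
  pose (gg := fmap D (tpair t s) : hom _ (g1 G)).
  pose (ff := fmap D (tpair s (v ∘ y)) : hom _ (g1 G)).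
  assert (H1 : gsrc G ∘ gg = gtgt G ∘ ff).
  { change (fmap D pr2 ∘ gg = fmap D pr1 ∘ ff). unfold gg, ff.
    rewrite <- fmap_comp; rewrite <- fmap_comp. f_equal. psimp. reflexivity. }
  assert (H2 : gsrc G ∘ ff = p ∘ (i ∘ fmap D y)).
  { change (fmap D pr2 ∘ ff = p ∘ (i ∘ fmap D y)). unfold ff.
    rewrite comp_assoc, i_over, <- fmap_comp, pr2_tpair. apply fmap_comp. }
  assert (Hf : go_act X ∘ pb_pair PBX ff (i ∘ fmap D y) H2 = i ∘ fmap D (ξ ∘ pr2)).
  { rewrite (transported_act_fmap H2 (t := s) (y := y)); try reflexivity.
    do 3 f_equal. apply prod_ext; psimp; reflexivity. }
  assert (H4 : gsrc G ∘ gg = p ∘ (go_act X ∘ pb_pair PBX ff (i ∘ fmap D y) H2)).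
  { rewrite comp_assoc, (go_anchor_act X), <- comp_assoc, pb_pair_p1. exact H1. }
  assert (H3 : gsrc G ∘ (gcomp G ∘ pb_pair (pullback (gsrc G) (gtgt G)) gg ff H1) =
               p ∘ (i ∘ fmap D y))
    by (rewrite comp_assoc, (gsrc_comp G), <- comp_assoc, pb_pair_p2; exact H2).
  assert (Hc : gcomp G ∘ pb_pair (pullback (gsrc G) (gtgt G)) gg ff H1 =
               fmap D (tpair t (v ∘ y))).
  { assert (K : pr2 ∘ tpair t s = pr1 ∘ tpair s (v ∘ y)) by (psimp; reflexivity).
    etransitivity; [exact (act_fmap DS_equiv H1 K eq_refl eq_refl)|]. f_equal. psimp. reflexivity. }
  pose proof (go_assoc H3 H4) as Hassoc.
  rewrite (transported_act_fmap H3 Hc eq_refl) in Hassoc.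
  rewrite (transported_act_fmap H4 (t := t) (y := ξ ∘ pr2)) in Hassoc;
    [| unfold gg; rewrite comp_assoc, ξ_over; reflexivity | exact Hf].
  exact (eq_sym Hassoc).
Qed.

Lemma transported_equivariant (a : A) (e : hom (prod S a) V) :
  v ∘ e = pr1 -> e ∘ times S pr2 = ξ ∘ times S e ->
  @is_equivariant _ G (galois_obj DS_equiv a) X (i ∘ fmap D e).
Proof.
  intros He Hd. split.
  - transitivity (fmap D v ∘ fmap D e); [rewrite <- i_over; apply comp_assoc|].
    rewrite <- fmap_comp, He. reflexivity.
  - intros W g x H H'.
    change (hom W (D (prod S S))) in g. change (hom W (D (prod S a))) in x.
    destruct (sliced_cover DS_equiv pr1 g) as (V' & j & g' & Ij & Hg).
    destruct (sliced_lift DS_equiv H Hg) as (x' & K & Hx).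
    assert (Ha : go_act (galois_obj DS_equiv a) ∘
                 pb_pair (pullback (gsrc G) (go_anchor (galois_obj DS_equiv a))) g x H ∘ j
                 = fmap D (tpair (pr1 ∘ g') (pr2 ∘ x')))
      by exact (act_cover DS_equiv H K Hg Hx).
    apply (iso_epi Ij).
    rewrite <- comp_assoc, Ha, (transported_act_cover H' (t := pr1 ∘ g') (y := e ∘ x')).
    + rewrite <- comp_assoc. f_equal. apply fmap_comp_eq.
      transitivity (e ∘ times S pr2 ∘ tpair (pr1 ∘ g') x');
        [unfold times; psimp; reflexivity|].
      rewrite Hd. unfold times. psimp. reflexivity.
    + etransitivity; [exact Hg|]. f_equal. apply prod_ext; psimp; [reflexivity|].
      rewrite comp_assoc, He. exact K.
    + rewrite <- !comp_assoc, fmap_comp. do 2 f_equal. exact Hx.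
Qed.
End Transport.

Lemma galois_ess_surj (X : gobj G) : exists a (k : hom (Phi a) X), is_iso k.
Proof.
  destruct (sliced_ess_surj DS_equiv (go_anchor X)) as (V & v & i & i_over & i_iso).
  destruct (transported_act_lift i_over i_iso) as (ξ & ξ_over & ξ_act).
  destruct (descent_effective cmp_equiv ξ_over (transported_unit i_iso ξ_over ξ_act)
              (transported_assoc i_iso ξ_over ξ_act)) as (a & e & Ie & He & Hd).
  exists a, (exist _ (i ∘ fmap D e) (transported_equivariant ξ_act He Hd)).
  apply gobj_iso, iso_comp; [apply fmap_iso|]; assumption.
Qed.
End GaloisEquivalence.

Theorem proposition1p1 (A P : FinLimCat) (D : Functor A P) (C : Functor P A)
  (adj : Adjunction D C) (S : A) :
  effective_descent (term_hom S) ->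
  IsEquivalence (sliced_functor D S) ->
  exists G : InternalGroupoid P, Equivalent A (GObjCat G).
Proof.
  intros [F [adjF cmp_equiv]] DS_equiv.
  exists (galois_groupoid DS_equiv), (galois_functor DS_equiv).
  apply fully_faithful_ess_surj_equiv.
  - exact (galois_faithful cmp_equiv).
  - exact (galois_full cmp_equiv).
  - exact (galois_ess_surj cmp_equiv).
Qed.
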